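(* Let $q \ge 2$ be a fixed integer. For a positive integer $N$, let $p$ be the unique integer such that \[ \frac{\ln q}{q-1}\, q^{p} \le N < \frac{\ln q}{q-1}\, q^{p+1}, \] and let $n = N + p$. There exist constants $N_0$ and $d > 0$ (depending on $q$ but not on $N$ or $P$) such that for every $N > N_0$ and every word $P$ of length $p$ over a $q$-letter alphabet, \[ G_P(N) \ge \frac{d\, q^n}{n^2}. \]
   Context: Fix an alphabet of size $q$. For a word $P = a_1 a_2 \cdots a_p$ of length $p$ and a positive integer $N$, $G_P(N)$ denotes the number of $q$-ary words $a_1 a_2 \cdots a_{N+p}$ (of length $N+p$) such that the factor $a_k a_{k+1} \cdots a_{k+p-1}$ equals $P$ for $k = 1$ and for $k = N+1$, and for no other $k$ with $1 \le k \le N+1$. Equivalently, $G_P(N)$ is the number of words of length $N+p$ that begin and end with $P$ and contain exactly two occurrences of $P$ as a factor. *)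

(* words are lists of naturals over the alphabet {0,...,q-1}. *)
From Stdlib Require Import Reals Lra Lia Arith List Bool.
Import ListNotations.

Fixpoint words (q n : nat) : list (list nat) :=
  match n with
  | O => [ [] ]
  | S n' => flat_map (fun w => map (fun a => a :: w) (seq 0 q)) (words q n')
  end.

(* P occurs in w at (0-based) position k, i.e. the factor of w of length |P|
   starting at position k equals P (0-based k corresponds to the paper's k+1). *)
Definition occurs_at (P w : list nat) (k : nat) : bool :=
  if list_eq_dec Nat.eq_dec (firstn (length P) (skipn k w)) P then true else false.

(* G_P(N): number of q-ary words of length N + |P| such that P occurs at the
   paper's positions k = 1 and k = N+1 and at no other k with 1 <= k <= N+1. *)
Definition G (q : nat) (P : list nat) (N : nat) : nat :=
  length (filter
    (fun w => forallb (fun k => Bool.eqb (occurs_at P w k)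
                                         (Nat.eqb k 0 || Nat.eqb k N))
                      (seq 0 (N + 1)))
    (words q (N + length P))).

From Stdlib Require Import Reals List Lra Lia Bool FinFun Wf_nat Classical_Prop.
Import ListNotations.

(* Let A(m) count the words y of length m such that P occurs in P ++ y only as a
   prefix, and a(m) = A(m) / q^m.  Appending one letter shows
   a(m+1) <= a(m) <= a(m+1) + q^-p a(m+1-p), and classifying the self-overlaps of P
   through its minimal period shows a(p-1) >= 1/4.  Together these force a to lose at
   most a factor 1 - 8 q^-p per step, so a stays above 2^-(q^5) / 4 during the at most
   q^(p+1) steps up to N - p.  Finally G_P(N) is A(N-p) minus the words whose appended
   copy of P overlaps another occurrence; the same overlap analysis bounds those by
   4/7 A(N-p) plus a negligible term.  Hence G_P(N) >= c_q q^(N-p), which is at least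
   d q^n / n^2 because n >= (ln q / (q-1)) q^p. *)

(** * Words and occurrences *)

Lemma NoDup_flat_map {A B : Type} (f : A -> list B) (l : list A) :
  NoDup l -> (forall x, In x l -> NoDup (f x)) ->
  (forall x y z, In x l -> In y l -> In z (f x) -> In z (f y) -> x = y) ->
  NoDup (flat_map f l).
Proof.
  induction l as [|a l IH]; intros Hl Hf Hdisj; simpl; [constructor|].
  inversion Hl; subst.
  apply NoDup_app.
  - apply Hf; simpl; auto.
  - apply IH; auto.
    + intros; apply Hf; simpl; auto.
    + intros x y z Hx Hy; apply (Hdisj x y z); simpl; auto.
  - intros z Hz Hz'. apply in_flat_map in Hz' as [y [Hy Hzy]].
    assert (a = y) by (apply (Hdisj a y z); simpl; auto). subst. contradiction.
Qed.

Lemma Forall_firstn {X} (Q : X -> Prop) n l : Forall Q l -> Forall Q (firstn n l).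
Proof. rewrite <- (firstn_skipn n l) at 1. intros H%Forall_app. tauto. Qed.

Lemma Forall_skipn {X} (Q : X -> Prop) n l : Forall Q l -> Forall Q (skipn n l).
Proof. rewrite <- (firstn_skipn n l) at 1. intros H%Forall_app. tauto. Qed.

Lemma in_words q n w :
  In w (words q n) <-> length w = n /\ Forall (fun a => a < q) w.
Proof.
  revert w; induction n as [|n IH]; intros w; simpl.
  - split.
    + intros [<-|[]]; auto.
    + intros [H _]; destruct w; simpl in *; auto; lia.
  - rewrite in_flat_map. split.
    + intros [v [Hv [a [<- Ha%in_seq]]%in_map_iff]].
      apply IH in Hv as [Hl Hf]. simpl; split; auto.
      constructor; auto; lia.
    + intros [Hl Hf]. destruct w as [|a v]; simpl in Hl; [lia|].
      inversion Hf; subst. exists v; split.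
      * apply IH; split; auto.
      * apply in_map_iff; exists a; split; auto. apply in_seq; lia.
Qed.

Lemma NoDup_words q n : NoDup (words q n).
Proof.
  induction n as [|n IH]; simpl.
  - repeat constructor; auto.
  - apply NoDup_flat_map; auto.
    + intros x _. apply Injective_map_NoDup; [|apply seq_NoDup].
      intros a b H; injection H; auto.
    + intros x y z _ _ [a [<- _]]%in_map_iff [b [Hb _]]%in_map_iff.
      injection Hb; auto.
Qed.

Lemma length_words q n : length (words q n) = q ^ n.
Proof.
  induction n as [|n IH]; simpl; auto.
  rewrite (flat_map_constant_length (c:=q)).
  - rewrite IH; lia.
  - intros; rewrite length_map, length_seq; auto.
Qed.

Lemma in_words_firstn q n m w : In w (words q n) -> m <= n ->
  In (firstn m w) (words q m).
Proof.
  intros [Hl Hf]%in_words Hm. apply in_words. split.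
  - rewrite length_firstn; lia.
  - apply Forall_firstn; auto.
Qed.

Lemma in_words_skipn q n m w : In w (words q n) ->
  In (skipn m w) (words q (n - m)).
Proof.
  intros [Hl Hf]%in_words. apply in_words. split.
  - rewrite length_skipn; lia.
  - apply Forall_skipn; auto.
Qed.

Lemma occurs_atP P w k :
  occurs_at P w k = true <-> firstn (length P) (skipn k w) = P.
Proof. unfold occurs_at. destruct list_eq_dec; split; auto; discriminate. Qed.

Lemma occurs_at_app_l P u v k : k + length P <= length u ->
  occurs_at P (u ++ v) k = occurs_at P u k.
Proof.
  intros H. unfold occurs_at. rewrite skipn_app, firstn_app, length_skipn.
  replace (length P - (length u - k)) with 0 by lia.
  rewrite firstn_O, app_nil_r. reflexivity.
Qed.

(* Positions [1 .. length y] are all the places other than the prefix where [P]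
   can occur in [P ++ y]. *)
Definition prefix_only (P y : list nat) : bool :=
  negb (existsb (occurs_at P (P ++ y)) (seq 1 (length y))).

Lemma prefix_onlyP P y : prefix_only P y = true <->
  forall k, 1 <= k <= length y -> occurs_at P (P ++ y) k = false.
Proof.
  unfold prefix_only. rewrite negb_true_iff, <- not_true_iff_false, existsb_exists.
  split.
  - intros H k Hk. apply not_true_iff_false. intros Ho.
    apply H. exists k. rewrite in_seq. split; auto; lia.
  - intros H [k [Hk%in_seq Ho]]. rewrite H in Ho; [discriminate|lia].
Qed.

Lemma prefix_onlyN P y : prefix_only P y = false <->
  exists k, 1 <= k <= length y /\ occurs_at P (P ++ y) k = true.
Proof.
  unfold prefix_only. rewrite negb_false_iff, existsb_exists.
  split; intros [k [Hk Ho]]; exists k; rewrite in_seq in *; split; auto; lia.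
Qed.

Lemma prefix_only_app P y z : prefix_only P (y ++ z) = true -> prefix_only P y = true.
Proof.
  rewrite !prefix_onlyP, length_app. intros H k Hk.
  rewrite <- (occurs_at_app_l P (P ++ y) z) by (rewrite length_app; lia).
  rewrite <- app_assoc. apply H. lia.
Qed.

Lemma prefix_only_firstn P y n : prefix_only P y = true -> prefix_only P (firstn n y) = true.
Proof.
  rewrite <- (firstn_skipn n y) at 1. apply prefix_only_app.
Qed.

Definition count_prefix_only (q : nat) (P : list nat) (m : nat) : nat :=
  length (filter (prefix_only P) (words q m)).

Lemma count_prefix_only_le_pow q P m : count_prefix_only q P m <= q ^ m.
Proof. unfold count_prefix_only. rewrite <- length_words. apply filter_length_le. Qed.

Definition extensions (q : nat) (P : list nat) (m : nat) : list (list nat) :=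
  flat_map (fun y => map (fun a => y ++ [a]) (seq 0 q)) (filter (prefix_only P) (words q m)).

Lemma length_extensions q P m : length (extensions q P m) = q * count_prefix_only q P m.
Proof.
  unfold extensions, count_prefix_only. rewrite (flat_map_constant_length (c:=q)).
  - lia.
  - intros; rewrite length_map, length_seq; auto.
Qed.

Lemma NoDup_extensions q P m : NoDup (extensions q P m).
Proof.
  apply NoDup_flat_map.
  - apply NoDup_filter, NoDup_words.
  - intros x _. apply Injective_map_NoDup; [|apply seq_NoDup].
    intros a b H. apply app_inj_tail in H. tauto.
  - intros x y z _ _ [a [<- _]]%in_map_iff [b [Hb _]]%in_map_iff.
    apply app_inj_tail in Hb as [-> _]. reflexivity.
Qed.

Lemma count_prefix_only_succ_le q P m :
  count_prefix_only q P (S m) <= q * count_prefix_only q P m.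
Proof.
  rewrite <- length_extensions. unfold count_prefix_only.
  apply NoDup_incl_length; [apply NoDup_filter, NoDup_words|].
  intros w [Hw Hg]%filter_In.
  induction w as [|a y _] using rev_ind.
  { apply in_words in Hw as [Hl _]. discriminate. }
  apply in_words in Hw as [Hl [Hy Ha]%Forall_app].
  rewrite length_app in Hl; simpl in Hl.
  apply in_flat_map. exists y. split.
  - apply filter_In. split.
    + apply in_words. split; auto; lia.
    + eapply prefix_only_app; eauto.
  - apply in_map_iff. exists a. split; auto.
    inversion Ha. apply in_seq. lia.
Qed.

(* Adding a letter to a word counted by [count_prefix_only q P m] either keeps it
   counted, or creates an occurrence of [P] that must then be its suffix. *)
Lemma count_prefix_only_le_succ q P m : 1 <= length P -> length P <= S m ->
  q * count_prefix_only q P m <=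
    count_prefix_only q P (S m) + count_prefix_only q P (S m - length P).
Proof.
  intros Hp Hpm. rewrite <- length_extensions. unfold count_prefix_only.
  rewrite <- (length_map (fun z => z ++ P) (filter _ (words q (S m - length P)))),
    <- length_app.
  apply NoDup_incl_length; [apply NoDup_extensions|].
  intros w [y [[Hy Hgy]%filter_In [a [<- Ha%in_seq]]%in_map_iff]]%in_flat_map.
  assert (Hya : In (y ++ [a]) (words q (S m))).
  { apply in_words in Hy as [Hl Hf]. apply in_words. rewrite length_app; simpl.
    split; [lia|]. apply Forall_app; split; auto. constructor; auto; lia. }
  pose proof Hy as [Hly _]%in_words.
  apply in_app_iff.
  destruct (prefix_only P (y ++ [a])) eqn:Eg; [left; apply filter_In; auto|right].
  apply prefix_onlyN in Eg as [k [Hk Ho]]. rewrite length_app in Hk; simpl in Hk.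
  assert (k = S m) as ->.
  { destruct (Nat.eq_dec k (S m)) as [|Hkm]; auto. exfalso.
    rewrite app_assoc, occurs_at_app_l in Ho by (rewrite length_app; lia).
    rewrite (proj1 (prefix_onlyP P y) Hgy k) in Ho; [discriminate|lia]. }
  apply occurs_atP in Ho.
  rewrite skipn_app, skipn_all2, app_nil_l in Ho by lia.
  rewrite firstn_all2 in Ho by (rewrite length_skipn, length_app; cbn [length]; lia).
  apply in_map_iff. exists (firstn (S m - length P) (y ++ [a])). split.
  - rewrite <- Ho at 2. apply firstn_skipn.
  - apply filter_In. split.
    + apply (in_words_firstn q (S m)); auto; lia.
    + rewrite firstn_app. replace (S m - length P - length y) with 0 by lia.
      rewrite firstn_O, app_nil_r. apply prefix_only_firstn; auto.
Qed.

(** * Periods *)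

Definition period (P : list nat) (s : nat) : Prop :=
  forall i, i + s < length P -> nth i P 0 = nth (i + s) P 0.

Definition min_period (P : list nat) (pi : nat) : Prop :=
  1 <= pi /\ period P pi /\ forall s, 1 <= s -> period P s -> pi <= s.

Lemma period_length P : period P (length P).
Proof. intros i Hi; lia. Qed.

Lemma period_mul P s k : period P s -> period P (k * s).
Proof.
  intros Hs. induction k as [|k IH]; intros i Hi.
  - rewrite Nat.add_0_r; reflexivity.
  - rewrite IH by (simpl in Hi; lia). rewrite Hs by (simpl in Hi; lia).
    f_equal. simpl; lia.
Qed.

Lemma period_sub P r s : period P r -> period P s -> r <= s -> s + r <= length P ->
  period P (s - r).
Proof.
  intros Hr Hs Hrs Hp i Hi.
  destruct (Nat.lt_ge_cases (i + s) (length P)) as [H1|H1].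
  - rewrite Hs by lia. rewrite (Hr (i + (s - r))) by lia. f_equal; lia.
  - replace i with (i - r + r) at 1 by lia. rewrite <- Hr by lia.
    rewrite Hs by lia. f_equal; lia.
Qed.

Lemma min_period_exists P : 1 <= length P -> exists pi, min_period P pi.
Proof.
  intros Hp.
  destruct (dec_inh_nat_subset_has_unique_least_element (fun s => 1 <= s /\ period P s))
    as [pi [[[H1 Hper] Hmin] _]].
  - intros n. apply classic.
  - exists (length P). split; auto. apply period_length.
  - exists pi. repeat split; auto.
Qed.

Lemma min_period_le_length P pi : 1 <= length P -> min_period P pi -> pi <= length P.
Proof. intros Hp (_ & _ & Hmin). apply Hmin; auto. apply period_length. Qed.

(* A weak form of the Fine-Wilf theorem. *)
Lemma period_min_period_mul P pi s : min_period P pi -> period P s -> 1 <= s ->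
  s + pi <= length P -> exists k, 1 <= k /\ s = k * pi.
Proof.
  intros Hpi. induction s as [s IH] using lt_wf_ind. intros Hs H1 H2.
  destruct Hpi as (Hpi1 & Hper & Hmin).
  destruct (Nat.lt_trichotomy s pi) as [Hlt|[Heq|Hgt]].
  - specialize (Hmin s H1 Hs). lia.
  - exists 1; lia.
  - destruct (IH (s - pi)) as [k [Hk Hk2]]; try lia.
    + apply period_sub; auto; lia.
    + exists (S k). simpl. lia.
Qed.

Definition long_period (p pi : nat) : nat := Nat.max pi (p - pi + 1).

Lemma period_cases P pi s : min_period P pi -> period P s -> 1 <= s ->
  (exists k, 1 <= k /\ s = k * pi) \/ long_period (length P) pi <= s.
Proof.
  intros Hpi Hs H1. destruct (Nat.le_gt_cases (s + pi) (length P)).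
  - left. apply (period_min_period_mul P pi s); auto.
  - right. destruct Hpi as (_ & _ & Hmin). specialize (Hmin s H1 Hs).
    unfold long_period. lia.
Qed.

Lemma suffix_block P pi k : period P pi -> 1 <= k -> k * pi <= length P ->
  firstn pi (skipn (length P - k * pi) P) = skipn (length P - pi) P.
Proof.
  intros Hp Hk Hkp. apply nth_ext with 0 0.
  - rewrite length_firstn, !length_skipn. nia.
  - intros i Hi. rewrite length_firstn, length_skipn in Hi.
    rewrite nth_firstn. destruct (Nat.ltb_spec i pi); [|lia].
    rewrite !nth_skipn, (period_mul P pi (k - 1) Hp) by nia.
    f_equal. nia.
Qed.

Lemma prefix_block P pi k : period P pi -> 1 <= k -> k * pi <= length P ->
  skipn (k * pi - pi) (firstn (k * pi) P) = firstn pi P.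
Proof.
  intros Hp Hk Hkp. apply nth_ext with 0 0.
  - rewrite length_skipn, !length_firstn. nia.
  - intros i Hi. rewrite length_skipn, length_firstn in Hi.
    rewrite nth_skipn, !nth_firstn.
    destruct (Nat.ltb_spec (k * pi - pi + i) (k * pi)); [|lia].
    destruct (Nat.ltb_spec i pi); [|nia].
    rewrite (period_mul P pi (k - 1) Hp i) by nia. f_equal. nia.
Qed.

(** * Overlapping occurrences *)

Lemma occurs_at_overlap_start P y j : 1 <= j < length P ->
  occurs_at P (P ++ y) j = true -> period P j /\ firstn j y = skipn (length P - j) P.
Proof.
  intros Hj Ho%occurs_atP.
  rewrite skipn_app in Ho. replace (j - length P) with 0 in Ho by lia.
  rewrite skipn_O, firstn_app, length_skipn in Ho.
  replace (length P - (length P - j)) with j in Ho by lia.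
  rewrite firstn_all2 in Ho by (rewrite length_skipn; lia).
  split.
  - intros i Hi. rewrite <- Ho at 1.
    rewrite app_nth1, nth_skipn by (rewrite length_skipn; lia).
    f_equal; lia.
  - apply (f_equal (skipn (length P - j))) in Ho.
    rewrite skipn_app, skipn_all2, length_skipn in Ho by (rewrite length_skipn; lia).
    replace (length P - j - (length P - j)) with 0 in Ho by lia. exact Ho.
Qed.

Lemma occurs_at_overlap_end P y s : 1 <= s < length P -> s <= length y ->
  occurs_at P (P ++ y ++ P) (length P + length y - s) = true ->
  period P s /\ skipn (length y - s) y = firstn s P.
Proof.
  intros Hs Hy Ho%occurs_atP.
  rewrite skipn_app, skipn_all2, app_nil_l in Ho by lia.
  replace (length P + length y - s - length P) with (length y - s) in Ho by lia.
  rewrite skipn_app in Ho. replace (length y - s - length y) with 0 in Ho by lia.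
  rewrite skipn_O, firstn_app, length_skipn in Ho.
  rewrite firstn_all2 in Ho by (rewrite length_skipn; lia).
  replace (length y - (length y - s)) with s in Ho by lia.
  split.
  - intros i Hi. rewrite <- Ho at 2.
    rewrite app_nth2, length_skipn by (rewrite length_skipn; lia).
    replace (i + s - (length y - (length y - s))) with i by lia.
    rewrite nth_firstn. destruct (Nat.ltb_spec i (length P - s)); [reflexivity|lia].
  - apply (f_equal (firstn s)) in Ho.
    rewrite firstn_app, length_skipn in Ho.
    replace (s - (length y - (length y - s))) with 0 in Ho by lia.
    rewrite firstn_O, app_nil_r, firstn_all2 in Ho by (rewrite length_skipn; lia).
    exact Ho.
Qed.

Lemma overlap_start_cases P pi y j : min_period P pi -> 1 <= j < length P ->
  occurs_at P (P ++ y) j = true ->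
  firstn pi y = skipn (length P - pi) P \/
  exists j', long_period (length P) pi <= j' < length P /\
             firstn j' y = skipn (length P - j') P.
Proof.
  intros Hpi Hj Ho. apply occurs_at_overlap_start in Ho as [Hper Hy]; auto.
  destruct (period_cases P pi j Hpi Hper ltac:(lia)) as [[k [Hk ->]]|Hlong].
  - left. destruct Hpi as (Hpi1 & Hpi & _).
    rewrite <- (suffix_block P pi k), <- Hy by (auto; lia).
    rewrite firstn_firstn. f_equal. nia.
  - right. exists j. split; [lia|exact Hy].
Qed.

Lemma overlap_end_cases P pi y s : min_period P pi -> 1 <= s < length P -> s <= length y ->
  occurs_at P (P ++ y ++ P) (length P + length y - s) = true ->
  skipn (length y - pi) y = firstn pi P \/
  exists s', long_period (length P) pi <= s' < length P /\
             skipn (length y - s') y = firstn s' P.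
Proof.
  intros Hpi Hs Hy Ho. apply occurs_at_overlap_end in Ho as [Hper Hys]; auto.
  destruct (period_cases P pi s Hpi Hper ltac:(lia)) as [[k [Hk ->]]|Hlong].
  - left. destruct Hpi as (Hpi1 & Hpi & _).
    rewrite <- (prefix_block P pi k), <- Hys by (auto; lia).
    rewrite skipn_skipn. f_equal. nia.
  - right. exists s. split; [lia|exact Hys].
Qed.

(** * Counting words through their overlaps *)

Lemma length_flat_map_le {A B} (f : A -> list B) l c :
  (forall x, In x l -> length (f x) <= c) -> length (flat_map f l) <= length l * c.
Proof.
  induction l as [|a l IH]; simpl; intros H; auto.
  rewrite length_app. pose proof (H a (or_introl eq_refl)).
  enough (length (flat_map f l) <= length l * c) by lia.
  apply IH. intros x Hx. apply H. auto.
Qed.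

Definition words_starting_with (q n : nat) (u : list nat) : list (list nat) :=
  map (app u) (words q (n - length u)).

Lemma length_words_starting_with q n u :
  length (words_starting_with q n u) = q ^ (n - length u).
Proof. unfold words_starting_with. rewrite length_map. apply length_words. Qed.

Lemma in_words_starting_with q n u w : In w (words q n) ->
  firstn (length u) w = u -> In w (words_starting_with q n u).
Proof.
  intros Hw Hu. apply in_map_iff. exists (skipn (length u) w). split.
  - rewrite <- Hu at 1. apply firstn_skipn.
  - apply in_words_skipn. auto.
Qed.

Definition prefix_only_ending_with (q : nat) (P : list nat) (n : nat) (u : list nat) :=
  map (fun z => z ++ u) (filter (prefix_only P) (words q (n - length u))).

Lemma length_prefix_only_ending_with q P n u :
  length (prefix_only_ending_with q P n u) = count_prefix_only q P (n - length u).
Proof. unfold prefix_only_ending_with. rewrite length_map. reflexivity. Qed.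

Lemma in_prefix_only_ending_with q P n u w : In w (words q n) ->
  prefix_only P w = true -> skipn (n - length u) w = u ->
  In w (prefix_only_ending_with q P n u).
Proof.
  intros Hw Hg Hu. pose proof Hw as [Hl _]%in_words.
  apply in_map_iff. exists (firstn (n - length u) w). split.
  - rewrite <- Hu at 2. apply firstn_skipn.
  - apply filter_In. split.
    + apply (in_words_firstn q n); auto; lia.
    + apply prefix_only_firstn; auto.
Qed.

Lemma count_not_prefix_only_short q P pi : 1 <= q -> 1 <= length P -> min_period P pi ->
  length (filter (fun y => negb (prefix_only P y)) (words q (length P - 1))) <=
    q ^ (length P - 1 - pi) +
    (length P - long_period (length P) pi) * q ^ (length P - 1 - long_period (length P) pi).
Proof.
  intros Hq Hp Hpi. pose proof (min_period_le_length P pi Hp Hpi).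
  remember (length P) as p eqn:Hp_def. set (s0 := long_period p pi).
  transitivity (length (words_starting_with q (p - 1) (skipn (p - pi) P) ++
    flat_map (fun j => words_starting_with q (p - 1) (skipn (p - j) P)) (seq s0 (p - s0)))).
  - apply NoDup_incl_length; [apply NoDup_filter, NoDup_words|].
    intros y [Hy [j [Hj Ho]]%negb_true_iff%prefix_onlyN]%filter_In.
    pose proof Hy as [Hly _]%in_words.
    apply in_app_iff.
    destruct (overlap_start_cases P pi y j Hpi ltac:(lia) Ho) as [Hy'|[j' [Hj' Hy']]];
      rewrite <- Hp_def in *.
    + left. apply in_words_starting_with; auto.
      now replace (length (skipn (p - pi) P)) with pi by (rewrite length_skipn; lia).
    + right. apply in_flat_map. exists j'. split; [apply in_seq; unfold s0 in *; lia|].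
      apply in_words_starting_with; auto.
      now replace (length (skipn (p - j') P)) with j' by (rewrite length_skipn; lia).
  - rewrite length_app, length_words_starting_with, length_skipn, <- Hp_def.
    replace (p - 1 - (p - (p - pi))) with (p - 1 - pi) by lia.
    apply Nat.add_le_mono; [reflexivity|].
    rewrite <- (length_seq (p - s0) s0) at 2.
    apply length_flat_map_le. intros j Hj%in_seq.
    rewrite length_words_starting_with, length_skipn.
    apply Nat.pow_le_mono_r; lia.
Qed.

Definition tail_overlap (P y : list nat) : bool :=
  existsb (fun s => occurs_at P (P ++ y ++ P) (length P + length y - s))
          (seq 1 (length P - 1)).

Lemma count_tail_overlap q P pi M : 1 <= q -> 1 <= length P -> length P <= M ->
  min_period P pi ->
  length (filter (tail_overlap P) (filter (prefix_only P) (words q M))) <=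
    count_prefix_only q P (M - pi) +
    (length P - long_period (length P) pi) * q ^ (M - long_period (length P) pi).
Proof.
  intros Hq Hp HM Hpi. pose proof (min_period_le_length P pi Hp Hpi).
  remember (length P) as p eqn:Hp_def. set (s0 := long_period p pi).
  transitivity (length (prefix_only_ending_with q P M (firstn pi P) ++
    flat_map (fun s => prefix_only_ending_with q P M (firstn s P)) (seq s0 (p - s0)))).
  - apply NoDup_incl_length; [apply NoDup_filter, NoDup_filter, NoDup_words|].
    intros y [[Hy Hg]%filter_In Hb]%filter_In.
    apply existsb_exists in Hb as [s [Hs%in_seq Ho]].
    pose proof Hy as [Hly _]%in_words.
    apply in_app_iff.
    destruct (overlap_end_cases P pi y s Hpi ltac:(lia) ltac:(lia) Ho)
      as [Hy'|[s' [Hs' Hy']]]; rewrite <- Hp_def, Hly in *.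
    + left. apply in_prefix_only_ending_with; auto.
      now replace (length (firstn pi P)) with pi by (rewrite length_firstn; lia).
    + right. apply in_flat_map. exists s'. split; [apply in_seq; unfold s0 in *; lia|].
      apply in_prefix_only_ending_with; auto.
      now replace (length (firstn s' P)) with s' by (rewrite length_firstn; lia).
  - rewrite length_app, length_prefix_only_ending_with, length_firstn, <- Hp_def.
    replace (Nat.min pi p) with pi by lia.
    apply Nat.add_le_mono; [reflexivity|].
    rewrite <- (length_seq (p - s0) s0) at 2.
    apply length_flat_map_le. intros s Hs%in_seq.
    rewrite length_prefix_only_ending_with, length_firstn.
    etransitivity; [apply count_prefix_only_le_pow|]. apply Nat.pow_le_mono_r; lia.
Qed.

Lemma occurs_at_two_occurrences P y k : prefix_only P y = true -> tail_overlap P y = false ->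
  k <= length P + length y ->
  occurs_at P (P ++ y ++ P) k = (k =? 0) || (k =? length P + length y).
Proof.
  intros Hg Hb Hk.
  destruct (Nat.eq_dec k 0) as [->|Hk0].
  { apply occurs_atP. now rewrite skipn_O, firstn_app, firstn_all, Nat.sub_diag, app_nil_r. }
  destruct (Nat.eq_dec k (length P + length y)) as [->|Hkn].
  { rewrite Nat.eqb_refl, orb_true_r. apply occurs_atP.
    rewrite app_assoc, skipn_app, skipn_all2, length_app, Nat.sub_diag
      by (rewrite length_app; lia).
    apply firstn_all. }
  rewrite (proj2 (Nat.eqb_neq _ _) Hk0), (proj2 (Nat.eqb_neq _ _) Hkn).
  destruct (Nat.le_gt_cases k (length y)).
  - rewrite app_assoc, occurs_at_app_l by (rewrite length_app; lia).
    apply prefix_onlyP; auto; lia.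
  - apply not_true_iff_false. intros Ho.
    apply not_true_iff_false in Hb. apply Hb, existsb_exists.
    exists (length P + length y - k). split; [apply in_seq; lia|].
    now replace (length P + length y - (length P + length y - k)) with k by lia.
Qed.

Lemma count_two_occurrences_le_G q P M : Forall (fun a => a < q) P ->
  length (filter (fun y => negb (tail_overlap P y)) (filter (prefix_only P) (words q M)))
    <= G q P (length P + M).
Proof.
  intros HP. unfold G.
  rewrite <- (length_map (fun y => P ++ y ++ P)).
  apply NoDup_incl_length.
  { apply Injective_map_NoDup; [|apply NoDup_filter, NoDup_filter, NoDup_words].
    intros y1 y2 H. now apply app_inv_head, app_inv_tail in H. }
  intros w [y [<- [[Hy Hg]%filter_In Hb%negb_true_iff]%filter_In]]%in_map_iff.
  apply in_words in Hy as [Hly Hy].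
  apply filter_In. split.
  - apply in_words. rewrite !length_app. split; [lia|].
    repeat (apply Forall_app; split); auto.
  - apply forallb_forall. intros k Hk%in_seq. apply Bool.eqb_true_iff.
    rewrite <- Hly. apply occurs_at_two_occurrences; auto; lia.
Qed.

Lemma count_prefix_only_le_G q P pi M : 1 <= q -> 1 <= length P -> length P <= M ->
  Forall (fun a => a < q) P -> min_period P pi ->
  count_prefix_only q P M <= G q P (length P + M) + count_prefix_only q P (M - pi) +
    (length P - long_period (length P) pi) * q ^ (M - long_period (length P) pi).
Proof.
  intros Hq Hp HM HP Hpi.
  pose proof (count_two_occurrences_le_G q P M HP).
  pose proof (count_tail_overlap q P pi M Hq Hp HM Hpi).
  pose proof (filter_length (tail_overlap P) (filter (prefix_only P) (words q M))).
  unfold count_prefix_only in *. lia.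
Qed.

Lemma le_pow_of_sq_le_pow q p s c : 1 <= q -> c ^ 2 <= q ^ p -> p <= 2 * s -> c <= q ^ s.
Proof.
  intros Hq Hc Hs. apply (Nat.pow_le_mono_l_iff c (q ^ s) 2); try lia.
  rewrite <- Nat.pow_mul_r. etransitivity; [exact Hc|].
  apply Nat.pow_le_mono_r; lia.
Qed.

Lemma count_prefix_only_short_ge q P pi : 2 <= q -> 2 <= length P -> min_period P pi ->
  4 * length P <= q ^ long_period (length P) pi ->
  q ^ (length P - 1) <= 4 * count_prefix_only q P (length P - 1).
Proof.
  intros Hq Hp Hpi Hlong.
  pose proof (count_not_prefix_only_short q P pi ltac:(lia) ltac:(lia) Hpi) as Hbad.
  pose proof (filter_length (prefix_only P) (words q (length P - 1))) as Hsplit.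
  rewrite length_words in Hsplit. fold (count_prefix_only q P (length P - 1)) in Hsplit.
  pose proof (min_period_le_length P pi ltac:(lia) Hpi).
  remember (length P) as p eqn:Hp_def. set (s0 := long_period p pi) in *.
  assert (Hperiodic : 2 * q ^ (p - 1 - pi) <= q ^ (p - 1)).
  { destruct Hpi as [Hpi1 _].
    replace (p - 1) with (p - 1 - pi + Nat.min pi (p - 1)) at 2 by lia.
    rewrite Nat.pow_add_r.
    assert (q ^ 1 <= q ^ Nat.min pi (p - 1)) by (apply Nat.pow_le_mono_r; lia).
    simpl in *. nia. }
  assert (Hlong' : 4 * ((p - s0) * q ^ (p - 1 - s0)) <= q ^ (p - 1)).
  { destruct (Nat.le_gt_cases p s0).
    - replace (p - s0) with 0 by lia. lia.
    - replace (p - 1) with ((p - 1 - s0) + s0) at 2 by lia. rewrite Nat.pow_add_r. nia. }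
  lia.
Qed.

Lemma cube_le_pow2 n : (10 <= n)%nat -> (n ^ 3 <= 2 ^ n)%nat.
Proof.
  intros Hn. induction Hn as [|n Hn IH]; [simpl; lia|].
  rewrite (Nat.pow_succ_r' 2 n).
  assert (S n * S n * S n <= 2 * (n * n * n))%nat by nia.
  replace (S n ^ 3)%nat with (S n * S n * S n)%nat by (cbn [Nat.pow]; ring).
  replace (n ^ 3)%nat with (n * n * n)%nat in IH by (cbn [Nat.pow]; ring). lia.
Qed.

Lemma mul_sq_le_pow q c n : (2 <= q)%nat -> (10 <= n)%nat -> (c <= n)%nat ->
  (c * n ^ 2 <= q ^ n)%nat.
Proof.
  intros Hq Hn Hc. transitivity (n ^ 3)%nat; [simpl; nia|].
  etransitivity; [apply cube_le_pow2; auto|]. apply Nat.pow_le_mono_l. lia.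
Qed.

Open Scope R_scope.

(** * Slowly decaying sequences *)

Lemma one_sub_pow_ge (x : R) (n : nat) : 0 <= x <= 1 -> 1 - INR n * x <= (1 - x) ^ n.
Proof.
  intros Hx. induction n as [|n IH]; [simpl; lra|].
  rewrite S_INR. change ((1 - x) ^ S n) with ((1 - x) * (1 - x) ^ n).
  assert (0 <= INR n * x) by (apply Rmult_le_pos; [apply pos_INR|lra]).
  nra.
Qed.

Lemma half_pow_le_one_sub_pow (x : R) (L k : nat) : 0 <= x <= 1 -> INR L * x <= / 2 ->
  (/ 2) ^ k <= (1 - x) ^ (L * k).
Proof.
  intros Hx HL. rewrite pow_mult. apply pow_incr.
  pose proof (one_sub_pow_ge x L Hx). lra.
Qed.

Lemma geometric_lower_bound (a : nat -> R) (r : R) (m j : nat) : 0 <= r ->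
  (forall i, (m <= i < m + j)%nat -> r * a i <= a (S i)) -> r ^ j * a m <= a (m + j)%nat.
Proof.
  intros Hr Hstep. induction j as [|j IH].
  - rewrite Nat.add_0_r. simpl. lra.
  - rewrite Nat.add_succ_r. change (r ^ S j) with (r * r ^ j).
    assert (IHj : r ^ j * a m <= a (m + j)%nat) by (apply IH; intros; apply Hstep; lia).
    specialize (Hstep (m + j)%nat ltac:(lia)).
    assert (r * (r ^ j * a m) <= r * a (m + j)%nat) by (apply Rmult_le_compat_l; auto).
    lra.
Qed.

Section SlowDecay.

Variables (a : nat -> R) (p : nat) (e : R).
Hypothesis a_nonneg : forall m, 0 <= a m.
Hypothesis a_noninc : forall m, a (S m) <= a m.
Hypothesis a_le_succ : forall m, (p <= S m)%nat -> a m <= a (S m) + e * a (S m - p)%nat.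
Hypothesis a_0 : a 0%nat <= 1.
Hypothesis a_start : / 4 <= a (p - 1)%nat.
Hypothesis p_pos : (1 <= p)%nat.
Hypothesis e_nonneg : 0 <= e.
Hypothesis pe_small : 16 * INR p * e <= 1.

Lemma noninc_le m m' : (m <= m')%nat -> a m' <= a m.
Proof.
  intros H. induction H as [|m' H IH]; [lra|]. specialize (a_noninc m'). lra.
Qed.

(* The decay already established below [m] shows that [a (S m - p)] is at most
   [8 * a m], so the step inequality loses at most [8 e a m]. *)
Lemma slow_decay_step m : (p - 1 <= m)%nat -> (1 - 8 * e) * a m <= a (S m).
Proof.
  induction m as [m IH] using lt_wf_ind. intros Hm.
  assert (Hp1 : 1 <= INR p) by (apply (le_INR 1); lia).
  assert (He : 8 * e <= / 2) by nra.
  assert (Hdecay : forall m0 j, (p - 1 <= m0)%nat -> (m0 + j <= m)%nat -> (j <= p)%nat ->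
            / 2 * a m0 <= a (m0 + j)%nat).
  { intros m0 j Hm0 Hj Hjp.
    pose proof (geometric_lower_bound a (1 - 8 * e) m0 j ltac:(lra)
      (fun i Hi => IH i ltac:(lia) ltac:(lia))) as Hg.
    pose proof (one_sub_pow_ge (8 * e) j ltac:(lra)).
    assert (INR j <= INR p) by (apply le_INR; lia).
    assert (INR j * e <= INR p * e) by (apply Rmult_le_compat_r; auto).
    assert (/ 2 * a m0 <= (1 - 8 * e) ^ j * a m0)
      by (apply Rmult_le_compat_r; [apply a_nonneg|lra]).
    lra. }
  assert (Hback : a (S m - p)%nat <= 8 * a m).
  { destruct (Nat.le_gt_cases (S m - p) (p - 1)) as [Hc|Hc].
    - pose proof (noninc_le 0 (S m - p) ltac:(lia)).
      pose proof (Hdecay (p - 1)%nat (m - (p - 1))%nat ltac:(lia) ltac:(lia) ltac:(lia)).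
      replace (p - 1 + (m - (p - 1)))%nat with m in * by lia. lra.
    - pose proof (Hdecay (S m - p)%nat (p - 1)%nat ltac:(lia) ltac:(lia) ltac:(lia)).
      replace (S m - p + (p - 1))%nat with m in * by lia.
      pose proof (a_nonneg m). lra. }
  specialize (a_le_succ m ltac:(lia)).
  assert (e * a (S m - p)%nat <= e * (8 * a m)) by (apply Rmult_le_compat_l; auto).
  lra.
Qed.

Lemma slow_decay m j : (p - 1 <= m)%nat -> (1 - 8 * e) ^ j * a m <= a (m + j)%nat.
Proof.
  intros Hm. apply geometric_lower_bound.
  - assert (1 <= INR p) by (apply (le_INR 1); lia). nra.
  - intros i Hi. apply slow_decay_step. lia.
Qed.

End SlowDecay.

(** * The density of words with a single occurrence *)

Definition density (q : nat) (P : list nat) (m : nat) : R :=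
  INR (count_prefix_only q P m) / INR q ^ m.

Section Density.

Variables (q : nat) (P : list nat).
Hypothesis q_ge2 : (2 <= q)%nat.

Let q_pos : 0 < INR q.
Proof. apply lt_0_INR. lia. Qed.

Lemma INR_count_prefix_only m : INR (count_prefix_only q P m) = density q P m * INR q ^ m.
Proof. unfold density. field. apply pow_nonzero. lra. Qed.

Lemma density_nonneg m : 0 <= density q P m.
Proof.
  unfold density. apply Rmult_le_pos; [apply pos_INR|].
  apply Rlt_le, Rinv_0_lt_compat, pow_lt. auto.
Qed.

Lemma density_0 : density q P 0 = 1.
Proof. unfold density. simpl. lra. Qed.

Lemma density_succ_le m : density q P (S m) <= density q P m.
Proof.
  pose proof (count_prefix_only_succ_le q P m) as H.
  apply le_INR in H. rewrite mult_INR, !INR_count_prefix_only in H.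
  change (INR q ^ S m) with (INR q * INR q ^ m) in H.
  assert (0 < INR q * INR q ^ m) by (apply Rmult_lt_0_compat, pow_lt; auto).
  nra.
Qed.

Lemma density_le_succ m : (1 <= length P)%nat -> (length P <= S m)%nat ->
  density q P m <=
    density q P (S m) + / INR q ^ length P * density q P (S m - length P).
Proof.
  intros Hp Hm. pose proof (count_prefix_only_le_succ q P m Hp Hm) as H.
  apply le_INR in H. rewrite mult_INR, plus_INR, !INR_count_prefix_only in H.
  assert (E : INR q ^ S m = INR q ^ length P * INR q ^ (S m - length P)).
  { rewrite <- pow_add. f_equal. lia. }
  assert (0 < INR q ^ length P) by (apply pow_lt; auto).
  apply (Rmult_le_reg_r (INR q ^ S m)); [apply pow_lt; auto|].
  replace (density q P m * INR q ^ S m) with (INR q * (density q P m * INR q ^ m))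
    by (simpl; ring).
  replace ((density q P (S m) + / INR q ^ length P * density q P (S m - length P))
    * INR q ^ S m) with (density q P (S m) * INR q ^ S m +
    density q P (S m - length P) * INR q ^ (S m - length P)) by (rewrite E; field; lra).
  exact H.
Qed.

Hypothesis P_alphabet : Forall (fun a => a < q)%nat P.
Hypothesis P_long : (4 <= length P)%nat.
Hypothesis P_big : ((32 * 2 ^ q ^ 5 * length P) ^ 2 <= q ^ length P)%nat.

Let P_long_R : 4 <= INR (length P).
Proof. replace 4 with (INR 4) by (simpl; lra). apply le_INR. exact P_long. Qed.

Let rate_nonneg : 0 <= 8 / INR q ^ length P.
Proof. apply Rlt_le, Rdiv_lt_0_compat; [lra|apply pow_lt; auto]. Qed.

Lemma big_le_pow s : (length P <= 2 * s)%nat -> (32 * 2 ^ q ^ 5 * length P <= q ^ s)%nat.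
Proof. apply (le_pow_of_sq_le_pow q (length P)); [lia|exact P_big]. Qed.

Lemma two_le_pow_q5 : (2 <= 2 ^ q ^ 5)%nat.
Proof.
  change 2%nat with (2 ^ 1)%nat at 1. apply Nat.pow_le_mono_r; [lia|].
  change 1%nat with (1 ^ 5)%nat. apply Nat.pow_le_mono_l. lia.
Qed.

Lemma density_start : / 4 <= density q P (length P - 1).
Proof.
  destruct (min_period_exists P ltac:(lia)) as [pi Hpi].
  assert (H4 : (4 * length P <= q ^ long_period (length P) pi)%nat).
  { pose proof (big_le_pow (long_period (length P) pi) ltac:(unfold long_period; lia)).
    pose proof two_le_pow_q5. nia. }
  pose proof (count_prefix_only_short_ge q P pi q_ge2 ltac:(lia) Hpi H4) as H.
  apply le_INR in H. rewrite mult_INR, pow_INR, INR_count_prefix_only in H.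
  assert (0 < INR q ^ (length P - 1)) by (apply pow_lt; auto).
  simpl in H. nra.
Qed.

Lemma decay_rate_small : 64 * INR (length P) / INR q ^ length P <= 1.
Proof.
  assert (H : (64 * length P <= q ^ length P)%nat).
  { pose proof (big_le_pow (length P) ltac:(lia)). pose proof two_le_pow_q5. nia. }
  apply le_INR in H. rewrite mult_INR, pow_INR in H. simpl in H.
  assert (0 < INR q ^ length P) by (apply pow_lt; auto).
  apply (Rmult_le_reg_r (INR q ^ length P)); auto.
  unfold Rdiv. rewrite Rmult_assoc, Rinv_l by lra. lra.
Qed.

Lemma density_decay m j : (length P - 1 <= m)%nat ->
  (1 - 8 / INR q ^ length P) ^ j * density q P m <= density q P (m + j).
Proof.
  intros Hm. apply (slow_decay (density q P) (length P)); auto.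
  - apply density_nonneg.
  - apply density_succ_le.
  - intros; apply density_le_succ; lia.
  - rewrite density_0. lra.
  - apply density_start.
  - lia.
  - unfold Rdiv in rate_nonneg. lra.
  - pose proof decay_rate_small. unfold Rdiv in *. lra.
Qed.

Lemma density_shift M pi : (length P - 1 + pi <= M)%nat -> (pi <= length P)%nat ->
  7 * density q P (M - pi) <= 8 * density q P M.
Proof.
  intros HM Hpi.
  pose proof (density_decay (M - pi) pi ltac:(lia)) as Hd.
  replace (M - pi + pi)%nat with M in Hd by lia.
  assert (Hp : INR pi <= INR (length P)) by (apply le_INR; lia).
  pose proof decay_rate_small. pose proof rate_nonneg. pose proof P_long_R.
  pose proof (density_nonneg (M - pi)).
  pose proof (one_sub_pow_ge (8 / INR q ^ length P) pi ltac:(unfold Rdiv in *; nra)).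
  assert (INR pi * (8 / INR q ^ length P) <= / 8) by (unfold Rdiv in *; nra).
  assert (7 / 8 * density q P (M - pi) <=
          (1 - 8 / INR q ^ length P) ^ pi * density q P (M - pi))
    by (apply Rmult_le_compat_r; lra).
  lra.
Qed.

Lemma density_far M : (length P - 1 <= M)%nat -> (M <= q ^ (length P + 1))%nat ->
  / 4 * (/ 2) ^ q ^ 5 <= density q P M.
Proof.
  intros HM1 HM2.
  set (L := (q ^ (length P - 4))%nat).
  assert (Hx : 0 <= 8 / INR q ^ length P <= 1).
  { pose proof decay_rate_small. pose proof rate_nonneg. pose proof P_long_R.
    split; [auto|unfold Rdiv in *; nra]. }
  assert (HL : INR L * (8 / INR q ^ length P) <= / 2).
  { unfold L. rewrite pow_INR.
    replace (INR q ^ length P) with (INR q ^ (length P - 4) * INR q ^ 4)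
      by (rewrite <- pow_add; f_equal; lia).
    assert (0 < INR q ^ (length P - 4)) by (apply pow_lt; auto).
    assert (16 <= INR q ^ 4).
    { replace 16 with (2 ^ 4) by lra. apply pow_incr. split; [lra|apply (le_INR 2); lia]. }
    unfold Rdiv. rewrite Rinv_mult.
    replace (INR q ^ (length P - 4) * (8 * (/ INR q ^ (length P - 4) * / INR q ^ 4)))
      with (8 / INR q ^ 4) by (field; repeat split; try apply pow_nonzero; lra).
    apply (Rmult_le_reg_r (INR q ^ 4)); [lra|].
    unfold Rdiv. rewrite Rmult_assoc, Rinv_l by lra. lra. }
  pose proof (half_pow_le_one_sub_pow _ L (q ^ 5) Hx HL) as Hhalf.
  pose proof (density_decay (length P - 1) (L * q ^ 5) ltac:(lia)) as Hd.
  assert (HM : (M <= length P - 1 + L * q ^ 5)%nat).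
  { unfold L. rewrite <- Nat.pow_add_r.
    replace (length P - 4 + 5)%nat with (length P + 1)%nat by lia. lia. }
  pose proof (noninc_le (density q P) density_succ_le M _ HM).
  pose proof density_start.
  assert (0 <= (/ 2) ^ q ^ 5) by (apply pow_le; lra).
  assert (/ 4 * (/ 2) ^ q ^ 5 <=
          (1 - 8 / INR q ^ length P) ^ (L * q ^ 5) * density q P (length P - 1))
    by (rewrite (Rmult_comm (/ 4)); apply Rmult_le_compat; lra).
  lra.
Qed.

Lemma long_overlaps_small pi M : (long_period (length P) pi <= M)%nat ->
  INR (length P - long_period (length P) pi) * INR q ^ (M - long_period (length P) pi)
    * (32 * 2 ^ q ^ 5) <= INR q ^ M.
Proof.
  intros HM. set (s0 := long_period (length P) pi) in *.
  assert (H : ((length P - s0) * q ^ (M - s0) * (32 * 2 ^ q ^ 5) <= q ^ M)%nat).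
  { replace M with (M - s0 + s0)%nat at 2 by lia. rewrite Nat.pow_add_r.
    pose proof (big_le_pow s0 ltac:(unfold s0, long_period; lia)).
    assert (Hc : ((length P - s0) * (32 * 2 ^ q ^ 5) <= q ^ s0)%nat) by nia.
    replace ((length P - s0) * q ^ (M - s0) * (32 * 2 ^ q ^ 5))%nat
      with (q ^ (M - s0) * ((length P - s0) * (32 * 2 ^ q ^ 5)))%nat by ring.
    apply Nat.mul_le_mono_l. exact Hc. }
  apply le_INR in H. rewrite !mult_INR, !pow_INR in H.
  replace (INR 32) with 32 in H by (simpl; lra).
  replace (INR 2) with 2 in H by (simpl; lra). exact H.
Qed.

Lemma density_G_ge pi M : min_period P pi -> (length P <= M)%nat ->
  density q P M * INR q ^ M <=
    INR (G q P (length P + M)) + density q P (M - pi) * INR q ^ (M - pi)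
    + INR (length P - long_period (length P) pi) * INR q ^ (M - long_period (length P) pi).
Proof.
  intros Hpi HM.
  pose proof (count_prefix_only_le_G q P pi M ltac:(lia) ltac:(lia) HM P_alphabet Hpi) as H.
  apply le_INR in H. rewrite !plus_INR, mult_INR, pow_INR, !INR_count_prefix_only in H.
  exact H.
Qed.

(* The words counted by [G] are those counted by [count_prefix_only] except the ones
   whose final copy of [P] overlaps another occurrence; slow decay of the density makes
   the overlaps through the minimal period at most 4/7 of the total. *)
Lemma G_ge_pow N : (3 * length P <= N)%nat -> (N <= q ^ (length P + 1))%nat ->
  INR q ^ (N - length P) / (20 * 2 ^ q ^ 5) <= INR (G q P N).
Proof.
  intros HN3 HNq.
  destruct (min_period_exists P ltac:(lia)) as [pi Hpi].
  pose proof (min_period_le_length P pi ltac:(lia) Hpi) as Hpi_le.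
  set (M := (N - length P)%nat).
  pose proof (density_G_ge pi M Hpi ltac:(lia)) as HG.
  replace (length P + M)%nat with N in HG by lia.
  pose proof (density_far M ltac:(lia) ltac:(lia)) as Hfar.
  pose proof (density_shift M pi ltac:(lia) ltac:(lia)) as Hshift.
  pose proof (long_overlaps_small pi M ltac:(unfold long_period; lia)) as Hlong.
  assert (Hqpi : 2 * INR q ^ (M - pi) <= INR q ^ M).
  { replace M with (M - pi + pi)%nat at 2 by lia. rewrite pow_add.
    assert (2 <= INR q) by (apply (le_INR 2); lia).
    assert (INR q ^ 1 <= INR q ^ pi) by (destruct Hpi; apply Rle_pow; [lra|lia]).
    pose proof (pow_lt (INR q) (M - pi) q_pos). simpl in *. nra. }
  pose proof (density_nonneg (M - pi)).
  assert (HX : 0 < 2 ^ q ^ 5) by (apply pow_lt; lra).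
  rewrite pow_inv in Hfar. set (X := 2 ^ q ^ 5) in *.
  set (Y := INR q ^ M / X).
  assert (HqM : 0 <= INR q ^ M) by (apply pow_le; lra).
  assert (0 <= Y) by (apply Rmult_le_pos; [lra|apply Rlt_le, Rinv_0_lt_compat; lra]).
  assert (Y / 4 <= density q P M * INR q ^ M).
  { apply Rmult_le_compat_r with (r := INR q ^ M) in Hfar; auto.
    unfold Y, Rdiv in *. lra. }
  assert (INR (length P - long_period (length P) pi) *
          INR q ^ (M - long_period (length P) pi) <= Y / 32).
  { apply (Rmult_le_reg_r (32 * X)); [lra|]. unfold Y, Rdiv.
    replace (INR q ^ M * / X * / 32 * (32 * X)) with (INR q ^ M) by (field; lra). lra. }
  assert (7 * (density q P (M - pi) * INR q ^ M) <= 8 * (density q P M * INR q ^ M)) by nra.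
  assert (2 * (density q P (M - pi) * INR q ^ (M - pi)) <=
          density q P (M - pi) * INR q ^ M) by nra.
  replace (INR q ^ M / (20 * X)) with (Y / 20) by (unfold Y; field; lra).
  lra.
Qed.

End Density.

(** * Asymptotics *)

Lemma large_length_bounds q (c : R) : (2 <= q)%nat -> 0 < c ->
  exists p0, forall p, (p0 <= p)%nat ->
    (4 <= p)%nat /\ ((32 * 2 ^ q ^ 5 * p) ^ 2 <= q ^ p)%nat /\ 3 * INR p <= c * INR q ^ p.
Proof.
  intros Hq Hc. destruct (INR_unbounded (3 / c)) as [k Hk].
  exists (10 + k + (32 * 2 ^ q ^ 5) ^ 2)%nat. intros p Hp. split; [lia|split].
  - rewrite Nat.pow_mul_l. apply mul_sq_le_pow; lia.
  - pose proof (mul_sq_le_pow q k p Hq ltac:(lia) ltac:(lia)) as H.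
    assert (Hkp : (k * p <= q ^ p)%nat) by (simpl in H; nia).
    apply le_INR in Hkp. rewrite mult_INR, pow_INR in Hkp.
    assert (Hk' : 3 <= c * INR k).
    { replace 3 with (c * (3 / c)) at 1 by (field; lra).
      apply Rmult_le_compat_l; lra. }
    pose proof (pos_INR p). nra.
Qed.

Lemma ln_div_pred_bounds (x : R) : 2 <= x -> 0 < ln x / (x - 1) <= 1.
Proof.
  intros Hx.
  assert (Hln : 0 < ln x) by (rewrite <- ln_1; apply ln_increasing; lra).
  assert (Hle : ln x <= x - 1).
  { pose proof (exp_ineq1 (ln x) ltac:(lra)). rewrite exp_ln in H by lra. lra. }
  split; [apply Rdiv_lt_0_compat; lra|].
  apply (Rmult_le_reg_r (x - 1)); [lra|].
  unfold Rdiv. rewrite Rmult_assoc, Rinv_l by lra. lra.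
Qed.

Lemma pow_div_sq_le (c x K : R) (N p : nat) : 0 < c -> 1 <= x -> 0 < K -> (p <= N)%nat ->
  c * x ^ p <= INR N -> c ^ 2 / K * x ^ (N + p) / INR (N + p) ^ 2 <= x ^ (N - p) / K.
Proof.
  intros Hc Hx HK HpN Hn.
  assert (Hy : 0 < x ^ p) by (apply pow_lt; lra).
  assert (HZ : 0 <= x ^ (N - p) / K) by (apply Rlt_le, Rdiv_lt_0_compat; [apply pow_lt|]; lra).
  assert (HNp : c * x ^ p <= INR (N + p)) by (rewrite plus_INR; pose proof (pos_INR p); lra).
  assert (Hsq : (c * x ^ p) ^ 2 <= INR (N + p) ^ 2)
    by (apply pow_incr; split; [apply Rlt_le, Rmult_lt_0_compat|]; lra).
  assert (0 < INR (N + p) ^ 2) by (pose proof (Rmult_lt_0_compat c (x ^ p) Hc Hy); nra).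
  replace (c ^ 2 / K * x ^ (N + p)) with ((c * x ^ p) ^ 2 * (x ^ (N - p) / K)).
  2:{ replace (N + p)%nat with (N - p + p + p)%nat by lia. rewrite !pow_add. field. lra. }
  apply (Rmult_le_reg_r (INR (N + p) ^ 2)); auto.
  unfold Rdiv at 1. rewrite Rmult_assoc, Rinv_l, Rmult_1_r by lra. nra.
Qed.

Theorem lemma5 (q : nat) (hq : (2 <= q)%nat) :
  exists (N0 : nat) (d : R), 0 < d /\
    forall (N p : nat) (P : list nat),
      (N > N0)%nat ->
      ln (INR q) / (INR q - 1) * INR q ^ p <= INR N ->
      INR N < ln (INR q) / (INR q - 1) * INR q ^ (p + 1) ->
      length P = p ->
      Forall (fun a => (a < q)%nat) P ->
      INR (G q P N) >= d * INR q ^ (N + p) / (INR (N + p)) ^ 2.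
Proof.
  assert (Hq : 2 <= INR q) by (apply (le_INR 2); lia).
  set (c := ln (INR q) / (INR q - 1)).
  pose proof (ln_div_pred_bounds (INR q) Hq) as Hc. fold c in Hc.
  assert (HX : 0 < 2 ^ q ^ 5) by (apply pow_lt; lra).
  destruct (large_length_bounds q c hq ltac:(lra)) as [p0 Hp0].
  exists (q ^ p0)%nat, (c ^ 2 / (20 * 2 ^ q ^ 5)).
  split; [apply Rdiv_lt_0_compat; [apply pow_lt|]; lra|].
  intros N p P HN Hlo Hhi <- HP.
  assert (HNq : (N <= q ^ (length P + 1))%nat).
  { apply INR_le. rewrite pow_INR.
    pose proof (pow_lt (INR q) (length P + 1) ltac:(lra)). nra. }
  assert (Hp : (p0 <= length P)%nat).
  { enough (p0 < length P + 1)%nat by lia. apply (Nat.pow_lt_mono_r_iff q); lia. }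
  destruct (Hp0 (length P) Hp) as (Hp4 & Hbig & H3).
  assert (HN3 : (3 * length P <= N)%nat).
  { apply INR_le. rewrite mult_INR. simpl (INR 3). lra. }
  pose proof (G_ge_pow q P hq HP Hp4 Hbig N HN3 HNq) as HG.
  apply Rle_ge. eapply Rle_trans; [|exact HG].
  apply pow_div_sq_le; try lra; lia.
Qed.
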